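(* Let $R=R_1\times\cdots\times R_t$ where $R_i=(\mathbb{F}_{q_i})^{m_i\times m_i}$ for prime powers $q_i$ and positive integers $m_i$. Then the normalized homogeneous weight $\omega$ on $R$ is given by \[ \omega(A_1,\ldots,A_t)=1-\prod_{i=1}^t\frac{(-1)^{r_i}q_i^{\binom{r_i}{2}}}{\alpha_{q_i,r_i}(q_i^{m_i})},\qquad r_i=\mathrm{rk}(A_i). \]
   Context: $\alpha_{q,r}(x)=\prod_{j=0}^{r-1}(x-q^j)$ (so $\alpha_{q,0}=1$) and $\binom{r}{2}=r(r-1)/2$. The normalized homogeneous weight on a finite Frobenius ring $R$ is the unique map $\omega:R\to\mathbb{R}$ with $\omega(0)=0$, $\omega(x)=\omega(y)$ whenever $Rx=Ry$, and $\sum_{y\in Rx}\omega(y)=|Rx|$ for every $x\in R\setminus\{0\}$. *)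

From HB Require Import structures.
From mathcomp Require Import all_boot all_order all_algebra all_field.
From mathcomp Require Import reals.
Set Implicit Arguments. Unset Strict Implicit. Unset Printing Implicit Defensive.
Import Order.TTheory GRing.Theory Num.Theory.
Local Open Scope ring_scope.

Definition prodMat (t : nat) (F : 'I_t -> finFieldType) (m : 'I_t -> nat) :=
  {dffun forall i : 'I_t, 'M[F i]_(m i)}.

Section ProdRing.
Variables (t : nat) (F : 'I_t -> finFieldType) (m : 'I_t -> nat).
Local Notation T := (prodMat F m).

Definition pzero : T := [ffun i => (0 : 'M[F i]_(m i))].
Definition pmul (a b : T) : T := [ffun i => (a i *m b i : 'M[F i]_(m i))].

Definition pideal (x : T) : {set T} := [set pmul r x | r : T].

Definition is_normalized_homogeneous_weight (K : realType) (w : T -> K) : Prop :=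
  [/\ w pzero = 0,
      (forall x y : T, pideal x = pideal y -> w x = w y) &
      (forall x : T, x != pzero -> \sum_(y in pideal x) w y = #|pideal x|%:R)].
End ProdRing.

Definition alpha (K : realType) (q r : nat) (x : K) : K :=
  \prod_(j < r) (x - (q ^ j)%:R).

From HB Require Import structures.
From mathcomp Require Import all_boot all_order all_algebra all_field.
From mathcomp Require Import reals.
From mathcomp Require Import ring.
Set Implicit Arguments. Unset Strict Implicit. Unset Printing Implicit Defensive.
Import Order.TTheory GRing.Theory Num.Theory.
Local Open Scope ring_scope.

(* Write phi_i(r) for the i-th factor of the product ([rank_factor]), so the
   claimed weight is 1 - prod_i phi_i(rk A_i).  Weights satisfying the axioms
   are unique, by induction on the size of the principal ideal, so it suffices
   to check that the formula satisfies them; the only nontrivial axiom reduces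
   to sum_(y in Rx) prod_i phi_i(rk y_i) = 0 for x <> 0.  Since every y in Rx
   is r x for equally many r, this sum is a multiple of
   prod_i sum_(R_i) phi_i(rk (R_i x_i)), and the factor of any i with x_i <> 0
   vanishes.  Indeed, up to invertible matrices x_i is a partial identity of
   positive rank, so R_i x_i is an arbitrary column v next to a matrix B of
   rank r < n.  Summing over v, q^r choices keep the rank r and q^n - q^r raise
   it to r + 1, while q^r phi(r) + (q^n - q^r) phi(r + 1) = 0. *)

Lemma big_dffun_distr (R : comNzSemiRingType) (I : finType) (T_ : I -> finType)
    (h : forall i, T_ i -> R) :
  \sum_(r : {dffun forall i : I, T_ i}) \prod_i h i (r i) =
  \prod_i \sum_(x : T_ i) h i x.
Proof.
rewrite (reindex (@dffun_of_fprod I T_)); last exact/onW_bij/dffun_of_fprod_bij.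
pose P_ i := [ffun x : T_ i => h i x].
transitivity (\sum_(t : fprod T_) \prod_(i in I) P_ i (t i)).
  by apply: eq_bigr => t _; apply: eq_bigr => i _; rewrite !ffunE.
rewrite big_fprod -(bigA_distr_big_dep _ (fun i j => untag 0 (P_ i) j)).
apply: eq_bigr => i _; rewrite -(big_tag (fun i x => P_ i x)).
by apply: eq_bigr => x _; rewrite ffunE.
Qed.

Section RankFactor.
Variables (K : realType) (q n : nat).
Hypothesis q_gt1 : (1 < q)%N.

Definition rank_factor (r : nat) : K :=
  (-1) ^+ r * (q ^ 'C(r, 2))%:R / alpha q r ((q ^ n)%:R : K).

Lemma alphaS r (x : K) : alpha q r.+1 x = alpha q r x * (x - (q ^ r)%:R).
Proof. by rewrite /alpha big_ord_recr. Qed.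

Lemma eqr_nat_exp2l (a b : nat) : ((q ^ a)%:R == (q ^ b)%:R :> K) = (a == b).
Proof. by rewrite eqr_nat eqn_exp2l. Qed.

Lemma alpha_expn_neq0 r : (r <= n)%N -> alpha q r ((q ^ n)%:R : K) != 0.
Proof.
move=> le_rn; apply/prodf_neq0 => j _; rewrite subr_eq0 eqr_nat_exp2l.
by rewrite eq_sym neq_ltn (leq_trans (ltn_ord j)).
Qed.

Lemma rank_factor_rec r : (r < n)%N ->
  (q ^ r)%:R * rank_factor r + ((q ^ n)%:R - (q ^ r)%:R) * rank_factor r.+1 = 0.
Proof.
move=> lt_rn; rewrite /rank_factor alphaS binS bin1 expnD natrM exprS.
have alpha_neq0 := alpha_expn_neq0 (ltnW lt_rn).
have qn_neq_qr : (q ^ n)%:R - (q ^ r)%:R != 0 :> K.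
  by rewrite subr_eq0 eqr_nat_exp2l neq_ltn lt_rn orbT.
by field; rewrite alpha_neq0 qn_neq_qr.
Qed.

End RankFactor.

Section MatrixSums.
Variables (K : realType) (F : finFieldType).
Local Notation q := #|F|.
Local Notation q_gt1 := (card_finNzRing_gt1 F).

Lemma card_rV_submx n k (A : 'M[F]_(k, n)) :
  #|[pred v : 'rV[F]_n | (v <= A)%MS]| = (q ^ \rank A)%N.
Proof.
transitivity #|[set u *m row_base A | u : 'rV[F]_(\rank A)]|.
  apply: eq_card => v; rewrite !inE -(eq_row_base A); apply/idP/imsetP.
    by case/submxP => u ->; exists u.
  by case=> u _ ->; rewrite submxMl.
by rewrite card_imset ?card_mx ?mul1n //; apply/row_free_inj/row_base_free.
Qed.

Lemma rank_col_mx_rV n k (v : 'rV[F]_n) (A : 'M[F]_(k, n)) :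
  \rank (col_mx v A) = (\rank A + ~~ (v <= A)%MS)%N.
Proof.
rewrite -addsmxE; have [vA | vNA] := boolP (v <= A)%MS.
  by rewrite addn0; move/addsmx_idPr: vA => ->.
apply/eqP; rewrite eqn_leq addn1 (ltn_leqif (mxrank_leqif_sup (addsmxSr v A))).
rewrite addsmx_sub submx_refl andbT vNA andbT.
have [le_vA _] := mxrank_adds_leqif v A.
exact: leq_trans le_vA (leq_add (rank_leq_row v) (leqnn _)).
Qed.

Lemma sum_rank_factor_col_mx n k (A : 'M[F]_(k, n)) : (\rank A < n)%N ->
  \sum_(v : 'rV[F]_n) rank_factor K q n (\rank (col_mx v A)) = 0.
Proof.
move=> lt_rA_n; rewrite (bigID (fun v => (v <= A)%MS)) /=.
under eq_bigr => v vA do rewrite rank_col_mx_rV vA addn0.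
under [X in _ + X]eq_bigr => v vNA do rewrite rank_col_mx_rV vNA addn1.
have card_in : #|[pred v : 'rV[F]_n | (v <= A)%MS]| = (q ^ \rank A)%N.
  exact: card_rV_submx.
have card_out : #|[pred v : 'rV[F]_n | ~~ (v <= A)%MS]| = (q ^ n - q ^ \rank A)%N.
  have card_rV : #|{: 'rV[F]_n}| = (q ^ n)%N by rewrite card_mx mul1n.
  by rewrite -card_in -card_rV -(cardC [pred v | (v <= A)%MS]) addKn; apply: eq_card.
rewrite !sumr_const card_in card_out -(rank_factor_rec K q_gt1 lt_rA_n).
by rewrite -natrB ?leq_exp2l ?q_gt1 ?(ltnW lt_rA_n) // !mulr_natl.
Qed.

Lemma pid_mx_block1 n s : (s <= n)%N ->
  pid_mx (1 + s) = block_mx (1%:M : 'M[F]_1) 0 0 (pid_mx s : 'M[F]_n) :> 'M_(1 + n).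
Proof.
move=> le_sn; rewrite -(subnKC le_sn) pid_mx_block -col_mx0 -row_mx0.
by rewrite block_mxA castmx_id col_mx0 row_mx0 -scalar_mx_block -pid_mx_block.
Qed.

Lemma sum_rank_factor_mul_pid n s : (s <= n)%N ->
  \sum_(R : 'M[F]_(1 + n))
    rank_factor K q (1 + n) (\rank (R *m (pid_mx (1 + s) : 'M_(1 + n)))) = 0.
Proof.
move=> le_sn; rewrite (pid_mx_block1 le_sn).
pose row_mx_pair (p : 'cV[F]_(1 + n) * 'M[F]_(1 + n, n)) := row_mx p.1 p.2.
rewrite (reindex row_mx_pair) /=; last first.
  exists (fun R => (lsubmx R, rsubmx R)) => [[v B] _ | R _] /=.
    by rewrite row_mxKl row_mxKr.
  exact: hsubmxK.
rewrite -(pair_bigA _ (fun v B => rank_factor K q (1 + n)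
  (\rank (row_mx_pair (v, B) *m block_mx 1%:M 0 0 (pid_mx s))))) /=.
rewrite exchange_big big1 // => B _.
rewrite -[RHS](@sum_rank_factor_col_mx (1 + n) n (B *m pid_mx s)^T); last first.
  by rewrite ltnS rank_leq_row.
rewrite (reindex (@trmx F (1 + n) 1)); last by exists trmx => v _; rewrite trmxK.
apply: eq_bigr => v _.
by rewrite mul_row_block !mulmx0 mulmx1 addr0 add0r -mxrank_tr tr_row_mx.
Qed.

Lemma sum_rank_factor_mulmx n (X : 'M[F]_n) : X != 0 ->
  \sum_(R : 'M[F]_n) rank_factor K q n (\rank (R *m X)) = 0.
Proof.
case: n X => [|n] X X_neq0; first by rewrite [X]flatmx0 eqxx in X_neq0.
transitivity (\sum_(R : 'M[F]_n.+1)
    rank_factor K q n.+1 (\rank (R *m (pid_mx (\rank X) : 'M_n.+1)))).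
  rewrite [RHS](reindex_inj (mulIr (col_ebase_unit X))); apply: eq_bigr => R _.
  by rewrite -{1}(mulmx_ebase X) !mulmxA mxrankMfree ?row_free_unit ?row_ebase_unit.
have := rank_leq_row X; rewrite -mxrank_eq0 -lt0n in X_neq0.
case: (\rank X) X_neq0 => // s _; rewrite ltnS.
exact: sum_rank_factor_mul_pid.
Qed.
End MatrixSums.

Section ProductRing.
Variables (K : realType) (t : nat) (F : 'I_t -> finFieldType) (m : 'I_t -> nat).
Local Notation T := (prodMat F m).
Local Notation pzero := (pzero F m).

Lemma pmulE (r x : T) i : pmul r x i = r i *m x i.
Proof. by rewrite ffunE. Qed.

Lemma pideal_id (x : T) : x \in pideal x.
Proof.
by apply/imsetP; exists [ffun i => 1%:M] => //; apply/ffunP => i; rewrite !ffunE mul1mx.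
Qed.

Lemma pideal_sub (x y : T) : y \in pideal x -> pideal y \subset pideal x.
Proof.
case/imsetP => s _ ->; apply/subsetP => _ /imsetP [r _ ->].
by apply/imsetP; exists (pmul r s) => //; apply/ffunP => i; rewrite !ffunE mulmxA.
Qed.

Lemma pideal_rank (x y : T) i : pideal x = pideal y -> \rank (x i) = \rank (y i).
Proof.
move=> eq_xy; have rank_le (a b : T) : a \in pideal b -> (\rank (a i) <= \rank (b i))%N.
  by case/imsetP => r _ ->; rewrite pmulE mxrankM_maxr.
have x_y : x \in pideal y by rewrite -eq_xy pideal_id.
have y_x : y \in pideal x by rewrite eq_xy pideal_id.
by apply/eqP; rewrite eqn_leq !rank_le.
Qed.

Lemma card_pmul_fiber (x y : T) : y \in pideal x ->
  #|[pred r : T | pmul r x == y]| = #|[pred r : T | pmul r x == pzero]|.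
Proof.
case/imsetP => r0 _ ->; rewrite -!sum1_card.
pose shift (r : T) : T := [ffun i => r i + r0 i].
have shift_inj : injective shift.
  by move=> a b /ffunP eq_ab; apply/ffunP => i; have := eq_ab i; rewrite !ffunE => /addIr.
rewrite (reindex_inj shift_inj); apply: eq_bigl => r; rewrite !inE.
apply/eqP/eqP => /ffunP eq_r; apply/ffunP => i; have := eq_r i; rewrite !ffunE mulmxDl.
  by move/(canRL (addrK _)); rewrite subrr.
by move=> ->; rewrite add0r.
Qed.

Lemma sum_pmul (G : T -> K) (x : T) :
  \sum_(r : T) G (pmul r x) =
  \sum_(y in pideal x) G y *+ #|[pred r : T | pmul r x == pzero]|.
Proof.
rewrite (partition_big (fun r => pmul r x) (mem (pideal x))) /=; last first.
  by move=> r _; apply/imsetP; exists r.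
apply: eq_bigr => y x_y; rewrite (eq_bigr (fun _ => G y)); last by move=> r /eqP ->.
by rewrite sumr_const (card_pmul_fiber x_y).
Qed.

Definition rank_weight (A : T) : K :=
  1 - \prod_i rank_factor K #|F i| (m i) (\rank (A i)).

Lemma sum_pideal_rank_factor (x : T) : x != pzero ->
  \sum_(y in pideal x) \prod_i rank_factor K #|F i| (m i) (\rank (y i)) = 0.
Proof.
move=> x_neq0.
have : #|[pred r : T | pmul r x == pzero]| != 0%N.
  apply/eqP => /card0_eq /(_ pzero); rewrite !inE => /negP; apply.
  by apply/eqP/ffunP => i; rewrite !ffunE mul0mx.
set c := #|_| => c_neq0; set S := (X in X = 0).
suff : S *+ c = 0 by move/eqP; rewrite mulrn_eq0 (negbTE c_neq0) => /eqP.
rewrite /S -sumrMnl -sum_pmul.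
under eq_bigr => r _ do under eq_bigr => i _ do rewrite pmulE.
rewrite (big_dffun_distr (fun i (R : 'M[F i]_(m i)) =>
  rank_factor K #|F i| (m i) (\rank (R *m x i)))).
have [i x_i_neq0] : exists i, x i != 0.
  apply/existsP; apply: contraR x_neq0 => /existsPn x_i_eq0.
  by apply/eqP/ffunP => i; rewrite ffunE; apply/eqP; have := x_i_eq0 i; rewrite negbK.
by rewrite (bigD1 i) //= sum_rank_factor_mulmx // mul0r.
Qed.

Lemma rank_weight_homogeneous : is_normalized_homogeneous_weight rank_weight.
Proof.
split.
- rewrite /rank_weight big1 ?subrr // => i _.
  by rewrite ffunE mxrank0 /rank_factor /alpha big_ord0 expr0 mul1r expn0 divr1.
- move=> x y eq_xy; rewrite /rank_weight.
  by under eq_bigr => i _ do rewrite (pideal_rank i eq_xy).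
- move=> x x_neq0.
  by rewrite sumrB sum_pideal_rank_factor // subr0 sumr_const.
Qed.

Lemma homogeneous_weight_unique (w1 w2 : T -> K) :
  is_normalized_homogeneous_weight w1 -> is_normalized_homogeneous_weight w2 ->
  w1 =1 w2.
Proof.
case=> w1_0 w1_ideal w1_sum [w2_0 w2_ideal w2_sum] x.
have [N] := ubnP #|pideal x|; elim: N x => // N IHN x card_x.
have [->|x_neq0] := eqVneq x pzero; first by rewrite w1_0 w2_0.
have := w1_sum x x_neq0; rewrite -(w2_sum x x_neq0).
pose same_ideal y := pideal y == pideal x.
rewrite (bigID same_ideal) [in RHS](bigID same_ideal) /=.
have eq_lower : \sum_(y in pideal x | pideal y != pideal x) w1 y =
                \sum_(y in pideal x | pideal y != pideal x) w2 y.
  apply: eq_bigr => y /andP [x_y ne_xy]; apply: IHN.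
  have : pideal y \proper pideal x by rewrite properEneq ne_xy pideal_sub.
  by move/proper_card/leq_trans; apply; rewrite -ltnS.
rewrite eq_lower => /addIr.
under eq_bigr => y /andP [_ /eqP eq_yx] do rewrite (w1_ideal _ _ eq_yx).
under [RHS]eq_bigr => y /andP [_ /eqP eq_yx] do rewrite (w2_ideal _ _ eq_yx).
rewrite !sumr_const => /eqP; rewrite eqr_pMn2r; first by move/eqP.
by apply/card_gt0P; exists x; rewrite unfold_in /= pideal_id /same_ideal eqxx.
Qed.

End ProductRing.

Theorem theorem4p1 (K : realType) (t : nat) (F : 'I_t -> finFieldType)
    (m : 'I_t -> nat) (hm : forall i, (0 < m i)%N)
    (w : prodMat F m -> K) (hw : is_normalized_homogeneous_weight w) :
  forall A : prodMat F m,
    w A = 1 - \prod_(i < t)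
            ((-1) ^+ (\rank (A i)) * (#|F i| ^ 'C(\rank (A i), 2))%:R
             / alpha #|F i| (\rank (A i)) ((#|F i| ^ m i)%:R : K)).
Proof. exact: homogeneous_weight_unique hw (@rank_weight_homogeneous K t F m). Qed.
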